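(* For every finite additive poset $A$, $h(A)\le\dim(A)\le wt(A)\le w(A)$.
   Context: An additive poset is a pair $(A,\le)$ where $A$ is an abelian group and $\le$ is a partial order on $A$ such that for all $a,b,c\in A$: $(\ast)$ if $b\le a$ and $c\le a$ then $b+c\le a$; $(\ast\ast)$ if $a\le b$ and $a\le c$ then $a\le a+b+c$. Such $A$ is a $\mathbb{Z}/2\mathbb{Z}$-vector space; $\dim(A)$ is its dimension. The height $h(A)$ is the maximal length $n$ of a chain $a_0<a_1<\cdots<a_n$ in $A$; the width $w(A)$ is the maximal cardinality of an antichain (set of pairwise incomparable elements); the weight $wt(A)$ is the number of atoms, where an atom is a nonzero $a$ with $\{x:x\le a\}=\{0,a\}$. *)

From HB Require Import structures.
From mathcomp Require Import all_boot all_order all_algebra.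
Set Implicit Arguments. Unset Strict Implicit. Unset Printing Implicit Defensive.
Import GRing.Theory.
Local Open Scope ring_scope.

(* An additive poset: a finite abelian group A with a partial order le
   satisfying the two axioms [star] and [star star] of the paper. *)
Definition additive_poset (A : finZmodType) (le : rel A) : Prop :=
  [/\ reflexive le, antisymmetric le, transitive le,
      (forall a b c : A, le b a -> le c a -> le (b + c) a) &
      (forall a b c : A, le a b -> le a c -> le a (a + b + c))].

Section AP.
Variables (A : finZmodType) (le : rel A).

Definition ltA (x y : A) := (x != y) && le x y.

Definition chainb (C : {set A}) : bool :=
  [forall x in C, forall y in C, le x y || le y x].

Definition antichainb (C : {set A}) : bool :=
  [forall x in C, forall y in C, (x != y) ==> ~~ le x y].

(* height: maximal n with a chain a_0 < a_1 < ... < a_n, i.e. a chain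
   with n+1 elements *)
Definition height : nat := \max_(C : {set A} | chainb C) (#|C|.-1)%N.

Definition width : nat := \max_(C : {set A} | antichainb C) #|C|.

Definition atoms : {set A} :=
  [set a | (a != 0) && ([set x | le x a] == [set 0; a])].

Definition weight : nat := #|atoms|.
End AP.

(* Linear independence over Z/2Z: no nonempty subset sums to zero. *)
Definition F2_independent (A : finZmodType) (B : {set A}) : bool :=
  [forall S : {set A}, (S \subset B) ==> ((\sum_(x in S) x == 0) ==> (S == set0))].

(* Dimension over Z/2Z: maximal size of a linearly independent set
   (meaningful since A is a Z/2Z-vector space). *)
Definition dimF2 (A : finZmodType) : nat :=
  \max_(B : {set A} | F2_independent B) #|B|.

From mathcomp Require Import all_boot all_order all_algebra.
Set Implicit Arguments. Unset Strict Implicit. Unset Printing Implicit Defensive.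
Import GRing.Theory.
Local Open Scope ring_scope.

(* Since [a + a <= a] and [a <= a + a + a], antisymmetry forces [a + a = 0],
   so A is an F_2-vector space, and [0 = b + b <= b] is the least element.
   A nonzero non-atom [a] lies strictly above some [x <> 0], and then
   [a = x + (a + x)] with both summands strictly below [a]; by induction the
   atoms span A, whence [dim <= wt].  Atoms are pairwise incomparable, whence
   [wt <= w].  Finally the nonzero elements of a chain are independent: if a
   nonempty subset summed to zero, its largest element [m] would be the sum of
   the others, which by [( * )] lies below their maximum [x < m]; this gives
   [h <= dim]. *)

Section FinitePoset.
Variables (T : finType) (le : rel T).
Hypotheses (le_refl : reflexive le) (le_anti : antisymmetric le)
  (le_trans : transitive le).

Definition lower_set (x : T) : {set T} := [set y | le y x].

Lemma card_lower_set_lt x y :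
  le y x -> y != x -> (#|lower_set y| < #|lower_set x|)%N.
Proof.
move=> le_yx neq_yx; apply: proper_card; apply/properP; rewrite /lower_set; split.
  by apply/subsetP => z; rewrite !inE => /le_trans; apply.
exists x; rewrite inE ?le_refl //; apply: contra neq_yx => le_xy.
by apply/eqP; apply: le_anti; rewrite le_yx le_xy.
Qed.

Lemma chain_max (S : {set T}) s :
  {in S &, total le} -> s \in S -> exists2 m, m \in S & {in S, forall y, le y m}.
Proof.
move=> totS sS; have [m mS max_m] := arg_maxnP (fun x => #|lower_set x|) sS.
exists m => // y yS; case/orP: (totS y m yS mS) => // le_my.
have [-> | neq_my] := eqVneq m y; first exact: le_refl.
by have := max_m y yS; rewrite /= leqNgt card_lower_set_lt.
Qed.

End FinitePoset.

Section ExponentTwo.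
Variable A : finZmodType.
Hypothesis addrr : forall a : A, a + a = 0.

Definition F2_span (G : {set A}) : {set A} :=
  [set \sum_(x in S) x | S : {set A} in powerset G].

Lemma sum_setD_sym (S1 S2 : {set A}) :
  \sum_(x in S1) x + \sum_(x in S2) x = \sum_(x in (S1 :\: S2) :|: (S2 :\: S1)) x.
Proof.
rewrite (big_setID S2) (big_setID S1 (A := S2)) setIC addrACA addrr add0r.
rewrite -bigU; last first.
  by apply/pred0P => x /=; rewrite !inE; case: (x \in S1); case: (x \in S2).
by apply: eq_bigl => x; rewrite !inE.
Qed.

Lemma F2_span0 (G : {set A}) : 0 \in F2_span G.
Proof. by apply/imsetP; exists set0; rewrite ?big_set0 // inE sub0set. Qed.

Lemma mem_F2_span (G : {set A}) (a : A) : a \in G -> a \in F2_span G.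
Proof.
by move=> aG; apply/imsetP; exists [set a]; rewrite ?big_set1 // inE sub1set.
Qed.

Lemma F2_spanD (G : {set A}) (a b : A) :
  a \in F2_span G -> b \in F2_span G -> a + b \in F2_span G.
Proof.
case/imsetP=> S1; rewrite inE => S1G ->; case/imsetP=> S2; rewrite inE => S2G ->.
apply/imsetP; exists ((S1 :\: S2) :|: (S2 :\: S1)); last exact: sum_setD_sym.
by rewrite inE subUset !(subset_trans (subsetDl _ _)).
Qed.

Lemma card_F2_span (G : {set A}) : (#|F2_span G| <= 2 ^ #|G|)%N.
Proof. by rewrite -card_powerset leq_imset_card. Qed.

Lemma card_F2_span_independent (B : {set A}) :
  F2_independent B -> #|F2_span B| = (2 ^ #|B|)%N.
Proof.
move=> indB; rewrite -card_powerset card_in_imset // => S1 S2.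
rewrite !inE => S1B S2B eq_sum.
have /eqP : \sum_(x in (S1 :\: S2) :|: (S2 :\: S1)) x = 0.
  by rewrite -sum_setD_sym eq_sum addrr.
move/forallP: indB => /(_ ((S1 :\: S2) :|: (S2 :\: S1))) /implyP.
rewrite subUset !(subset_trans (subsetDl _ _)) // => /(_ isT) /implyP H /H.
by rewrite setU_eq0 !setD_eq0 => /andP [S12 S21]; apply/eqP; rewrite eqEsubset S12.
Qed.

Lemma dimF2_le_spanning (G : {set A}) : F2_span G = [set: A] -> (dimF2 A <= #|G|)%N.
Proof.
move=> spanG; apply/bigmax_leqP => B indB.
rewrite -(leq_exp2l _ _ (isT : 1 < 2)%N) -card_F2_span_independent //.
by rewrite (leq_trans (max_card _)) // -cardsT -spanG card_F2_span.
Qed.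

End ExponentTwo.

Section AdditivePoset.
Variables (A : finZmodType) (le : rel A).
Hypothesis HA : additive_poset le.

Let le_refl : reflexive le. Proof. by case: HA. Qed.
Let le_anti : antisymmetric le. Proof. by case: HA. Qed.
Let le_trans : transitive le. Proof. by case: HA. Qed.
Let add_le_ub : forall a b c : A, le b a -> le c a -> le (b + c) a.
Proof. by case: HA. Qed.
Let le_add3 : forall a b c : A, le a b -> le a c -> le a (a + b + c).
Proof. by case: HA. Qed.

Lemma addrr (a : A) : a + a = 0.
Proof.
have le_aa_a : le (a + a) a by apply: add_le_ub.
have le_aaa_a : le (a + (a + a)) a by apply: add_le_ub.
have eq_aaa : a + a + a = a.
  by apply: le_anti; rewrite le_add3 ?le_refl // -addrA le_aaa_a.
by apply: (addrI a); rewrite addr0 addrA.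
Qed.

Lemma le0r (a : A) : le 0 a.
Proof. by rewrite -(addrr a); apply: add_le_ub. Qed.

Lemma sum_le (S : {set A}) x : {in S, forall y, le y x} -> le (\sum_(y in S) y) x.
Proof.
by move=> le_Sx; apply: (big_ind (le^~ x)) => //; [apply: le0r | apply: add_le_ub].
Qed.

Lemma chain_total (C : {set A}) : chainb le C -> {in C &, total le}.
Proof.
by move=> chC x y xC yC; move/forall_inP: chC => /(_ x xC) /forall_inP ->.
Qed.

Lemma nonatom_lower (a : A) :
  a != 0 -> a \notin atoms le -> exists x, [/\ le x a, x != 0 & x != a].
Proof.
rewrite inE => -> /= not_atom.
suff /existsP [x /and3P [le_xa x0 neq_xa]] :
    [exists x, [&& le x a, x != 0 & x != a]].
  by exists x.
apply: contraR not_atom => /existsPn no_x; apply/eqP/setP => w; rewrite !inE.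
have [-> | w0] := eqVneq w 0; first by rewrite le0r.
have [-> | wa] := eqVneq w a; first by rewrite le_refl orbT.
by have := no_x w; rewrite w0 wa !andbT => /negbTE.
Qed.

Lemma F2_span_atoms : F2_span (atoms le) = [set: A].
Proof.
suff span_lt n a : (#|lower_set le a| < n)%N -> a \in F2_span (atoms le).
  by apply/setP => a; rewrite inE (span_lt _ _ (ltnSn _)).
elim: n a => // n IH a; rewrite ltnS => le_an.
have [-> | a0] := eqVneq a 0; first exact: F2_span0.
have [a_atom | /(nonatom_lower a0) [x [le_xa x0 neq_xa]]] := boolP (a \in atoms le).
  exact: mem_F2_span.
have le_axa : le (a + x) a by apply: add_le_ub.
have neq_axa : a + x != a by rewrite -[X in _ != X]addr0 (inj_eq (addrI a)).
have -> : a = x + (a + x) by rewrite addrCA addrr addr0.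
by apply: (F2_spanD addrr); apply: IH; apply: leq_trans le_an;
  apply: (card_lower_set_lt le_refl le_anti le_trans).
Qed.

Lemma atoms_antichain : antichainb le (atoms le).
Proof.
apply/forall_inP => x xa; apply/forall_inP => y ya; apply/implyP => neq_xy.
apply/negP => le_xy; move: xa ya; rewrite !inE => /andP [x0 _] /andP [_ /eqP Dy].
have : x \in [set w | le w y] by rewrite inE.
by rewrite Dy !inE (negbTE x0) (negbTE neq_xy).
Qed.

Lemma chain_F2_independent (C : {set A}) : chainb le C -> F2_independent (C :\ 0).
Proof.
move=> chC; apply/forallP => S; apply/implyP => SC; apply/implyP => /eqP sumS0.
apply/eqP; have [// | [s sS]] := set_0Vmem S; exfalso.
have SC' : S \subset C := subset_trans SC (subsetDl C [set 0]).
have totS := sub_in2 (subsetP SC') (chain_total chC).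
have [m mS max_m] := chain_max le_refl le_anti le_trans totS sS.
have m_sum : m = \sum_(y in S :\ m) y.
  by apply: (addrI m); rewrite -(big_setD1 m mS) sumS0 addrr.
have m0 : m != 0 by have := subsetP SC m mS; rewrite !inE => /andP [].
have [Sm0 | [y ySm]] := set_0Vmem (S :\ m).
  by move: m0; rewrite m_sum Sm0 big_set0 eqxx.
have totSm := sub_in2 (subsetP (subsetDl S [set m])) totS.
have [x xSm max_x] := chain_max le_refl le_anti le_trans totSm ySm.
move: xSm; rewrite !inE => /andP [neq_xm xS].
have le_mx : le m x by rewrite m_sum; apply: sum_le.
by move/negP: neq_xm; apply; apply/eqP; apply: le_anti; rewrite le_mx max_m.
Qed.

Lemma height_le_dimF2 : (height le <= dimF2 A)%N.
Proof.
apply/bigmax_leqP => C chC.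
apply: leq_trans (leq_bigmax_cond _ (chain_F2_independent chC)).
by rewrite (cardsD1 0 C); case: (_ \in _) => //; apply: leq_pred.
Qed.

Lemma dimF2_le_weight : (dimF2 A <= weight le)%N.
Proof. exact: (dimF2_le_spanning addrr F2_span_atoms). Qed.

Lemma weight_le_width : (weight le <= width le)%N.
Proof. exact: leq_bigmax_cond atoms_antichain. Qed.

End AdditivePoset.

Theorem theorem7p1 (A : finZmodType) (le : rel A) :
  additive_poset le ->
  [/\ (height le <= dimF2 A)%N, (dimF2 A <= weight le)%N & (weight le <= width le)%N].
Proof.
move=> HA; split;
  [exact: height_le_dimF2 | exact: dimF2_le_weight | exact: weight_le_width].
Qed.
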